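(* The special monoid $\Pi_2=\langle a,b,c\mid (ab^ic)^2=1\ (i\geq 1)\rangle$ has context-free word problem, and none of its maximal subgroups is finitely generated.
   Context: For a monoid $M$ with finite generating set $A$, the word problem of $M$ with respect to $A$ is the language $\{u\#v^{\mathrm{rev}} \mid u,v\in A^\ast,\ u=_M v\}$, where $\#\notin A$ and $v^{\mathrm{rev}}$ is the reversal of $v$; $M$ has context-free word problem if this language is context-free. For an idempotent $e$ of $M$, the maximal subgroup of $M$ containing $e$ is the group of units of $eMe$. *)

From Stdlib Require List.
From mathcomp Require Import all_boot.
Unset Printing Implicit Defensive.

(* The monoid congruence on A^* generated by a set R of defining relations
   (l, r) (meaning l = r).  The presented monoid <A | R> is A^* / cong R. *)
Inductive cong {A : Type} (R : seq A -> seq A -> Prop) : seq A -> seq A -> Prop :=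
| cong_rel u v l r : R l r -> cong R (u ++ l ++ v) (u ++ r ++ v)
| cong_refl w : cong R w w
| cong_sym w1 w2 : cong R w1 w2 -> cong R w2 w1
| cong_trans w1 w2 w3 : cong R w1 w2 -> cong R w2 w3 -> cong R w1 w3.

Definition is_idempotent {A : Type} (R : seq A -> seq A -> Prop) (e : seq A) : Prop :=
  cong R (e ++ e) e.

Definition in_eMe {A : Type} (R : seq A -> seq A -> Prop) (e x : seq A) : Prop :=
  exists y, cong R x (e ++ y ++ e).

Definition eMe_inverse {A : Type} (R : seq A -> seq A -> Prop) (e x y : seq A) : Prop :=
  in_eMe R e y /\ cong R (x ++ y) e /\ cong R (y ++ x) e.

(* x lies in the maximal subgroup H_e = group of units of eMe. *)
Definition in_maxsub {A : Type} (R : seq A -> seq A -> Prop) (e x : seq A) : Prop :=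
  in_eMe R e x /\ exists y, eMe_inverse R e x y.

(* H_e is finitely generated (as a group): there is a finite list gs of
   elements of H_e such that every element of H_e is a (possibly empty)
   product, in eMe, of elements of gs and their inverses; the empty product
   is the identity e of H_e. *)
Definition maxsub_fg {A : Type} (R : seq A -> seq A -> Prop) (e : seq A) : Prop :=
  exists gs : seq (seq A),
    (forall g, List.In g gs -> in_maxsub R e g) /\
    forall x, in_maxsub R e x ->
      exists ws : seq (seq A),
        (forall w, List.In w ws ->
           List.In w gs \/ exists g, List.In g gs /\ eMe_inverse R e g w) /\
        cong R x (e ++ flatten ws).

Record cfg (T : finType) := CFG {
  cfg_N : finType;
  cfg_rules : seq (cfg_N * seq (cfg_N + T));
  cfg_start : cfg_N }.
Arguments cfg_N {T}. Arguments cfg_rules {T}. Arguments cfg_start {T}.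

Definition cfg_step {T : finType} (G : cfg T) (s1 s2 : seq (cfg_N G + T)) : Prop :=
  exists u v (X : cfg_N G) rhs,
    (X, rhs) \in cfg_rules G /\ s1 = u ++ inl X :: v /\ s2 = u ++ rhs ++ v.

Inductive derives {T : finType} (G : cfg T) : seq (cfg_N G + T) -> seq (cfg_N G + T) -> Prop :=
| derives_refl s : derives G s s
| derives_step s1 s2 s3 : cfg_step G s1 s2 -> derives G s2 s3 -> derives G s1 s3.

Definition cfg_lang {T : finType} (G : cfg T) (w : seq T) : Prop :=
  derives G [:: inl (cfg_start G)] (map inr w).

Definition context_free {T : finType} (L : seq T -> Prop) : Prop :=
  exists G : cfg T, forall w, L w <-> cfg_lang G w.

(* Over the alphabet option A, [Some x] is the letter x and [None] is #. *)
Definition word_problem {A : finType} (R : seq A -> seq A -> Prop) (w : seq (option A)) : Prop :=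
  exists u v : seq A, cong R u v /\ w = map Some u ++ None :: map Some (rev v).

Definition la : 'I_3 := @Ordinal 3 0 isT.
Definition lb : 'I_3 := @Ordinal 3 1 isT.
Definition lc : 'I_3 := @Ordinal 3 2 isT.

Definition Pi2_rel (l r : seq 'I_3) : Prop :=
  exists i : nat, 1 <= i /\
    l = (la :: nseq i lb ++ [:: lc]) ++ (la :: nseq i lb ++ [:: lc]) /\ r = [::].

(* Normal forms: reading a word onto a stack and erasing every occurrence of
   a relator x_i x_i (x_i = a b^i c) as soon as it appears computes a normal
   form; it is invariant under the defining relations, so two words are equal
   iff their normal forms coincide.  Every word is a "padding" of its normal
   form by words equal to 1, and these trivial words have an inductive,
   grammar-like description (one-words / mid-words).  Hence u = v iff u and v
   are paddings of a common word, and an explicit six-nonterminal grammar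
   generates u # v^rev exactly for such pairs.

   Maximal subgroups: the same stack analysis shows that every idempotent is
   e = p z with z p = 1, so w |-> z w p embeds H_e into the units of Pi_2.
   Pi_2 acts on the naturals with x_i acting as the transposition (0 i), and a
   unit fixes every point beyond its length.  So products of finitely many
   generators fix a large point N, while p x_N z lies in H_e and moves N. *)
From mathcomp Require Import all_boot.
From Stdlib Require Import Setoid Morphisms Lia.
From mathcomp Require Import zify.

Set Implicit Arguments.
Unset Strict Implicit.

Section Congruence.
Variables (A : Type) (R : seq A -> seq A -> Prop).

Lemma cong_ctx (u v x y : seq A) : cong R u v -> cong R (x ++ u ++ y) (x ++ v ++ y).
Proof.
elim=> [u' v' l r Hlr|w|w1 w2 _ IH|w1 w2 w3 _ IH1 _ IH2].
- by have := @cong_rel _ R (x ++ u') (v' ++ y) l r Hlr; rewrite -!catA.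
- exact: cong_refl.
- exact: cong_sym.
- exact: cong_trans IH2.
Qed.
End Congruence.
Arguments cong_ctx {A R u v} x y.

#[export] Instance cong_equiv (A : Type) (R : seq A -> seq A -> Prop) : Equivalence (cong R).
Proof. split; [exact: cong_refl | exact: cong_sym | exact: cong_trans]. Qed.

#[export] Instance cong_cat_proper (A : Type) (R : seq A -> seq A -> Prop) :
  Proper (cong R ==> cong R ==> cong R) (@cat A).
Proof.
move=> u u' Hu v v' Hv; apply: (@cong_trans _ _ _ (u' ++ v)).
- by have := cong_ctx [::] v Hu.
- by have := cong_ctx u' [::] Hv; rewrite !cats0.
Qed.

#[export] Instance cong_cons_proper (A : Type) (R : seq A -> seq A -> Prop) (x : A) :
  Proper (cong R ==> cong R) (cons x).
Proof. move=> u u' Hu; exact: (@cong_cat_proper A R [:: x] [:: x] (cong_refl R _) _ _ Hu). Qed.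

Notation C := (cong Pi2_rel).

Ltac catn := repeat (rewrite -catA || rewrite cat_cons).

(* The relator words x_i = a b^i c, and their reversals, which is how they
   appear on the stack used below to compute normal forms. *)
Definition xword (i : nat) : seq 'I_3 := la :: nseq i lb ++ [:: lc].
Definition xrev (i : nat) : seq 'I_3 := lc :: nseq i lb ++ [:: la].

Lemma rev_xrev i : rev (xrev i) = xword i.
Proof. by rewrite /xrev rev_cons rev_cat rev_nseq /= -cats1. Qed.

Lemma xword_sq i : 0 < i -> C (xword i ++ xword i) [::].
Proof.
move=> Hi; have := @cong_rel _ Pi2_rel [::] [::] (xword i ++ xword i) [::].
by rewrite /= !cats0; apply; exists i.
Qed.

Lemma nseqSr (T : Type) (n : nat) (x : T) : nseq n.+1 x = nseq n x ++ [:: x].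
Proof. by rewrite -addn1 nseqD. Qed.

(* A word is read letter by letter onto a stack (the reversed
   word read so far); whenever the top of the stack becomes (x_i x_i)^rev it is
   erased. *)

Fixpoint bsplit (s : seq 'I_3) : nat * seq 'I_3 :=
  if s is x :: s' then
    (if x == lb then let: (n, r) := bsplit s' in (n.+1, r) else (0, s))
  else (0, [::]).

Lemma bsplitE s : let: (n, r) := bsplit s in s = nseq n lb ++ r.
Proof.
elim: s => //= x s; case: (bsplit s) => n r IH.
by case: eqP => [->|_] //=; rewrite IH.
Qed.

Lemma bsplit_nseq i x s : x != lb -> bsplit (nseq i lb ++ x :: s) = (i, x :: s).
Proof. by move=> Hx; elim: i => /= [|i ->]; first by rewrite (negbTE Hx). Qed.

Definition pop_xrev (st : seq 'I_3) : option (nat * seq 'I_3) :=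
  if st is x :: s1 then
    if x == lc then
      let: (n, s2) := bsplit s1 in
      if s2 is y :: s3 then (if (y == la) && (0 < n) then Some (n, s3) else None) else None
    else None
  else None.

Lemma pop_xrev_cat i s : 0 < i -> pop_xrev (xrev i ++ s) = Some (i, s).
Proof. by move=> Hi; rewrite /xrev /= -catA /= bsplit_nseq //= Hi. Qed.

Lemma pop_xrevP st i s : pop_xrev st = Some (i, s) -> st = xrev i ++ s /\ 0 < i.
Proof.
case: st => [|x s1] //=; case: eqP => // ->.
move: (bsplitE s1); case: (bsplit s1) => n' [|y s3] // ->.
by case: ifP => // /andP[/eqP -> Hn] [<- <-]; rewrite /xrev -catA.
Qed.

Definition pop_rel (st : seq 'I_3) : option (seq 'I_3) :=
  if pop_xrev st is Some (n, s3) then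
    (if pop_xrev s3 is Some (m, s4) then (if n == m then Some s4 else None) else None)
  else None.

Lemma pop_rel_cat i s : 0 < i -> pop_rel (xrev i ++ xrev i ++ s) = Some s.
Proof. by move=> Hi; rewrite /pop_rel pop_xrev_cat // pop_xrev_cat // eqxx. Qed.

Lemma pop_relP st s : pop_rel st = Some s -> exists2 i, 0 < i & st = xrev i ++ xrev i ++ s.
Proof.
rewrite /pop_rel; case E1: (pop_xrev st) => [[n s3]|] //.
case E2: (pop_xrev s3) => [[m s4]|] //; case: eqP => // Enm [Es]; subst m s4.
by move/pop_xrevP: E1 => [-> Hn]; move/pop_xrevP: E2 => [-> _]; exists n.
Qed.

Lemma pop_rel_nlc st l : l != lc -> pop_rel (l :: st) = None.
Proof. by move=> H; rewrite /pop_rel /= (negbTE H). Qed.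

Definition push (st : seq 'I_3) (l : 'I_3) : seq 'I_3 :=
  if pop_rel (l :: st) is Some s then s else l :: st.

Definition nf (st w : seq 'I_3) : seq 'I_3 := foldl push st w.

Lemma nf_cat st u v : nf st (u ++ v) = nf (nf st u) v.
Proof. exact: foldl_cat. Qed.

Lemma nf_nolc st w : lc \notin w -> nf st w = rev w ++ st.
Proof.
elim: w st => //= l w IH st; rewrite in_cons negb_or => /andP[Hl Hw].
by rewrite /push pop_rel_nlc 1?eq_sym // IH // rev_cons cat_rcons.
Qed.

Lemma nf_xword st i : 0 < i ->
  nf st (xword i) = if pop_rel (xrev i ++ st) is Some s then s else xrev i ++ st.
Proof.
move=> Hi; have Hnc : lc \notin la :: nseq i lb by elim: i {Hi}.
rewrite /xword -cat_cons nf_cat (nf_nolc st Hnc).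
by rewrite /= /push rev_cons rev_nseq /xrev -cats1 -catA.
Qed.

Definition irreducible (st : seq 'I_3) : Prop := forall k, pop_rel (drop k st) = None.

Lemma irreducible_push st l : irreducible st -> irreducible (push st l).
Proof.
move=> H; rewrite /push; case E: (pop_rel (l :: st)) => [s|]; last first.
  by case=> [|k] //=; rewrite drop0.
move/pop_relP: E => [i Hi Est] k.
have -> : s = drop (size (xrev i ++ xrev i)) (l :: st) by rewrite Est catA drop_size_cat.
by rewrite drop_drop size_cat /xrev /= addSn addnS /=.
Qed.

Lemma irreducible_nf st w : irreducible st -> irreducible (nf st w).
Proof. by elim: w st => //= l w IH st H; apply/IH/irreducible_push. Qed.

Lemma irreducible_nil : irreducible [::].
Proof. by case. Qed.

(* Reading a defining relator onto an irreducible stack leaves it unchanged: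
   either the relator cancels itself, or it first cancels against the stack
   and is then rebuilt. *)
Lemma nf_relator st i : irreducible st -> 0 < i -> nf (nf st (xword i)) (xword i) = st.
Proof.
move=> Hirr Hi; rewrite (nf_xword st Hi) /pop_rel pop_xrev_cat //.
case Hp: (pop_xrev st) => [[m s4]|]; last by rewrite nf_xword // pop_rel_cat.
case: eqP => [Em|_]; last by rewrite nf_xword // pop_rel_cat.
subst m; move/pop_xrevP: Hp => [Est _]; rewrite nf_xword // /pop_rel pop_xrev_cat //.
case Hp2: (pop_xrev s4) => [[m' s5]|]; last by rewrite Est.
case: eqP => [Em|_]; last by rewrite Est.
move/pop_xrevP: Hp2 => [Es4 _]; have := Hirr 0.
by rewrite drop0 Est Es4 -Em pop_rel_cat.
Qed.

Lemma nf_cong u v : C u v -> nf [::] u = nf [::] v.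
Proof.
elim=> [u' v' l r [i [Hi [-> ->]]]|w|w1 w2 _ IH|w1 w2 w3 _ IH1 _ IH2] //.
- by rewrite cat0s -/(xword i) !nf_cat nf_relator //; apply: irreducible_nf irreducible_nil.
- by rewrite IH1.
Qed.

Lemma push_cong st l : C (rev (l :: st)) (rev (push st l)).
Proof.
rewrite /push; case E: (pop_rel (l :: st)) => [s|]; last reflexivity.
move/pop_relP: E => [i Hi ->]; rewrite !rev_cat !rev_xrev -catA xword_sq // cats0.
reflexivity.
Qed.

Lemma nf_cong_cat st w : C (rev st ++ w) (rev (nf st w)).
Proof.
elim: w st => [|l w IH] st /=; first by rewrite cats0; reflexivity.
by rewrite -(IH (push st l)) -cat1s catA cats1 -rev_cons push_cong; reflexivity.
Qed.

Lemma cong_nf u : C u (rev (nf [::] u)).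
Proof. exact: nf_cong_cat [::] u. Qed.

(* A grammar-shaped description of the words equal to 1.  [one_word t]: t is
   built from the empty word by concatenation and by wrapping a word of the form
   t m (t a one-word, m a mid-word) as a t m c; [mid_word m]: m is a padded
   version of b^i c a b^i (i >= 1), padding meaning interleaved one-words. *)
Inductive one_word : seq 'I_3 -> Prop :=
| one_nil : one_word [::]
| one_cat u v : one_word u -> one_word v -> one_word (u ++ v)
| one_wrap u v : one_word u -> mid_word v -> one_word (la :: u ++ v ++ [:: lc])
with mid_word : seq 'I_3 -> Prop :=
| mid_base e1 e2 e3 e4 : one_word e1 -> one_word e2 -> one_word e3 -> one_word e4 ->
    mid_word (lb :: e1 ++ lc :: e2 ++ la :: e3 ++ lb :: e4)
| mid_step e1 n e2 : one_word e1 -> mid_word n -> one_word e2 ->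
    mid_word (lb :: e1 ++ n ++ lb :: e2).

Scheme one_word_mut := Induction for one_word Sort Prop
with mid_word_mut := Induction for mid_word Sort Prop.
Combined Scheme one_mid_mut from one_word_mut, mid_word_mut.

Lemma one_mid_cong : (forall t, one_word t -> C t [::]) /\
  (forall v, mid_word v -> exists2 i, 0 < i & C v (nseq i lb ++ lc :: la :: nseq i lb)).
Proof.
apply: one_mid_mut.
- reflexivity.
- by move=> u v _ Hu _ Hv; rewrite Hu Hv; reflexivity.
- move=> u v _ Hu _ [i Hi Hv]; rewrite Hu Hv /=.
  have -> : la :: (nseq i lb ++ lc :: la :: nseq i lb) ++ [:: lc] = xword i ++ xword i.
    by rewrite /xword /= -!catA.
  exact: xword_sq.
- move=> e1 e2 e3 e4 _ H1 _ H2 _ H3 _ H4; exists 1 => //.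
  by rewrite H1 H2 H3 H4; reflexivity.
- move=> e1 n e2 _ H1 _ [i Hi Hn] _ H2; exists i.+1 => //.
  rewrite H1 Hn H2 /=; have -> : lb :: nseq i lb = nseq i lb ++ [:: lb] by exact: nseqSr.
  by rewrite -!catA; reflexivity.
Qed.

Lemma mid_word_cat v t : mid_word v -> one_word t -> mid_word (v ++ t).
Proof.
case=> [e1 e2 e3 e4 H1 H2 H3 H4|e1 n e2 H1 H2 H3] Ht; catn.
- by apply: mid_base => //; apply: one_cat.
- by apply: mid_step => //; apply: one_cat.
Qed.

(* Two words are equal in Pi_2 iff they are paddings of a common
   word; this is what makes the word problem context-free. *)
Inductive padded : seq 'I_3 -> seq 'I_3 -> Prop :=
| padded_nil t : one_word t -> padded t [::]
| padded_cons t x u w : one_word t -> padded u w -> padded (t ++ x :: u) (x :: w).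

Lemma padded_cong u w : padded u w -> C u w.
Proof.
elim=> [t Ht|t x u' w' Ht _ IH]; first exact: one_mid_cong.1.
by rewrite (one_mid_cong.1 _ Ht) IH; reflexivity.
Qed.

Lemma padded_nilP u : padded u [::] -> one_word u.
Proof. by move=> H; inversion H. Qed.

Lemma padded_consP u x w :
  padded u (x :: w) -> exists t u', [/\ one_word t, padded u' w & u = t ++ x :: u'].
Proof. by move=> H; inversion H; subst; exists t, u0. Qed.

Lemma padded_split u w v :
  padded u (w ++ v) -> exists u1 u2, [/\ u = u1 ++ u2, padded u1 w & padded u2 v].
Proof.
elim: w u => [|x w IH] u /=.
  by move=> H; exists [::], u; split=> //; apply/padded_nil/one_nil.
move/padded_consP=> [t [u' [Ht Hu' ->]]]; have [u1 [u2 [-> H1 H2]]] := IH _ Hu'.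
by exists (t ++ x :: u1), u2; split; [rewrite -catA | exact: padded_cons |].
Qed.

Lemma padded_cat_one u w t : padded u w -> one_word t -> padded (u ++ t) w.
Proof.
elim=> [t' Ht'|t' x u' w' Ht' _ IH] Ht.
- exact/padded_nil/one_cat.
- by rewrite -catA /=; apply: padded_cons => //; apply: IH.
Qed.

Lemma padded_rcons u w l : padded u w -> padded (u ++ [:: l]) (w ++ [:: l]).
Proof.
elim=> [t Ht|t x u' w' Ht _ IH].
- by apply: padded_cons => //; apply/padded_nil/one_nil.
- by rewrite -catA /=; apply: padded_cons.
Qed.

Lemma padded_mid n u : padded u (nseq n.+1 lb ++ lc :: la :: nseq n.+1 lb) ->
  exists t v, [/\ one_word t, mid_word v & u = t ++ v].
Proof.
elim: n u => [|n IH] u.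
  move=> /= /padded_consP [t [u1 [Ht H1 ->]]].
  move: H1 => /padded_consP [t1 [u2 [Ht1 H2 ->]]].
  move: H2 => /padded_consP [t2 [u3 [Ht2 H3 ->]]].
  move: H3 => /padded_consP [t3 [u4 [Ht3 /padded_nilP Hu4 ->]]].
  exists t, (lb :: t1 ++ lc :: t2 ++ la :: t3 ++ lb :: u4).
  by split=> //; apply: mid_base.
have -> : nseq n.+2 lb ++ lc :: la :: nseq n.+2 lb =
  lb :: (nseq n.+1 lb ++ lc :: la :: nseq n.+1 lb) ++ [:: lb].
  by rewrite {2}(nseqSr n.+1); catn.
move/padded_consP=> [t [u1 [Ht H1 ->]]].
have [v1 [v2 [-> Hv1 Hv2]]] := padded_split H1.
have [t' [v' [Ht' Hv' ->]]] := IH _ Hv1.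
move: Hv2 => /padded_consP [t'' [u3 [Ht'' /padded_nilP Hu3 ->]]].
exists t, (lb :: t' ++ (v' ++ t'') ++ lb :: u3); split=> //; last by rewrite -!catA.
by apply: mid_step => //; apply: mid_word_cat.
Qed.

Lemma padded_relator n u : 0 < n -> padded u (xword n ++ xword n) -> one_word u.
Proof.
case: n => [//|m] _.
have -> : xword m.+1 ++ xword m.+1 =
  la :: (nseq m.+1 lb ++ lc :: la :: nseq m.+1 lb) ++ [:: lc] by rewrite /xword /= -!catA.
move/padded_consP=> [t0 [u1 [Ht0 H1 ->]]].
have [v1 [v2 [-> Hv1 Hv2]]] := padded_split H1.
have [t [v [Ht Hv ->]]] := padded_mid Hv1.
move: Hv2 => /padded_consP [t'' [u3 [Ht'' /padded_nilP Hu3 ->]]].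
have -> : t0 ++ la :: ((t ++ v) ++ t'' ++ lc :: u3) =
  t0 ++ (la :: t ++ (v ++ t'') ++ [:: lc]) ++ u3 by rewrite /= -!catA.
by apply: one_cat => //; apply: one_cat => //; apply: one_wrap => //; apply: mid_word_cat.
Qed.

Lemma padded_nf st p w : padded p (rev st) -> padded (p ++ w) (rev (nf st w)).
Proof.
elim: w st p => [|l w IH] st p H /=; first by rewrite cats0.
rewrite -cat1s catA; apply: IH; have Hl := padded_rcons l H; rewrite /push.
case E: (pop_rel (l :: st)) => [s|]; last by rewrite rev_cons -cats1.
move/pop_relP: E => [i Hi Est].
have Est' : rev st ++ [:: l] = rev s ++ xword i ++ xword i.
  by rewrite cats1 -rev_cons Est !rev_cat !rev_xrev catA.
move: Hl; rewrite Est' => /padded_split [u1 [u2 [-> H1 /(padded_relator Hi) H2]]].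
exact: padded_cat_one H1 H2.
Qed.

Lemma padded_nf_nil u : padded u (rev (nf [::] u)).
Proof. exact/(@padded_nf [::] [::] u)/padded_nil/one_nil. Qed.

Definition wp_padded (w : seq (option 'I_3)) : Prop :=
  exists u v wd, [/\ padded u wd, padded v wd & w = map Some u ++ None :: map Some (rev v)].

Lemma word_problem_padded w : word_problem Pi2_rel w <-> wp_padded w.
Proof.
split.
- move=> [u [v [Huv ->]]]; exists u, v, (rev (nf [::] u)); split=> //.
  + exact: padded_nf_nil.
  + by rewrite (nf_cong Huv); apply: padded_nf_nil.
- move=> [u [v [wd [Hu Hv ->]]]]; exists u, v; split=> //.
  by rewrite (padded_cong Hu) (padded_cong Hv); reflexivity.
Qed.

Section Derivations.
Variables (T : finType) (G : cfg T).

Lemma derives_trans s1 s2 s3 : derives G s1 s2 -> derives G s2 s3 -> derives G s1 s3.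
Proof. by elim=> [s|a b c Hst _ IH] H //; apply: derives_step Hst (IH H). Qed.

Lemma derives_ctx u v s s' : derives G s s' -> derives G (u ++ s ++ v) (u ++ s' ++ v).
Proof.
elim=> [x|a b c [u0 [v0 [X [rhs [Hin [-> ->]]]]]] _ IH]; first exact: derives_refl.
apply: derives_step IH; exists (u ++ u0), (v0 ++ v), X, rhs.
by split=> //; split; catn.
Qed.

Lemma derives_cat s1 s1' s2 s2' :
  derives G s1 s1' -> derives G s2 s2' -> derives G (s1 ++ s2) (s1' ++ s2').
Proof.
move=> H1 H2; apply: (@derives_trans _ (s1' ++ s2)).
- exact: (derives_ctx [::] s2 H1).
- by have := derives_ctx s1' [::] H2; rewrite !cats0.
Qed.

Lemma derives_rule X rhs : (X, rhs) \in cfg_rules G -> derives G [:: inl X] rhs.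
Proof.
move=> Hin; apply: derives_step (derives_refl _ _).
by exists [::], [::], X, rhs; rewrite cats0.
Qed.

Lemma derives_term t s s' : derives G s s' -> derives G (inr t :: s) (inr t :: s').
Proof. exact: (derives_cat (derives_refl _ [:: inr t])). Qed.

Lemma derives_nonterm X w s s' :
  derives G [:: inl X] w -> derives G s s' -> derives G (inl X :: s) (w ++ s').
Proof. exact: derives_cat. Qed.
End Derivations.

(* Nonterminals: S (start), Q (the part between the outer
   one-words, matching letters around the separator), E / N (one-words /
   mid-words), F / M (reversals of one-words / mid-words). *)
Definition sym := ('I_6 + option 'I_3)%type.
Definition nS : 'I_6 := @Ordinal 6 0 isT.
Definition nQ : 'I_6 := @Ordinal 6 1 isT.
Definition nE : 'I_6 := @Ordinal 6 2 isT.
Definition nN : 'I_6 := @Ordinal 6 3 isT.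
Definition nF : 'I_6 := @Ordinal 6 4 isT.
Definition nM : 'I_6 := @Ordinal 6 5 isT.
Notation nt X := (@inl 'I_6 (option 'I_3) X).
Notation tl x := (@inr 'I_6 (option 'I_3) (Some x)).
Notation tA := (tl la).
Notation tB := (tl lb).
Notation tC := (tl lc).
Notation tH := (@inr 'I_6 (option 'I_3) None).

Definition Pi2_rules : seq ('I_6 * seq sym) :=
  [:: (nS, [:: nt nE; nt nQ; nt nF]);
      (nQ, [:: tH]);
      (nQ, [:: tA; nt nS; tA]);
      (nQ, [:: tB; nt nS; tB]);
      (nQ, [:: tC; nt nS; tC]);
      (nE, [::]);
      (nE, [:: nt nE; nt nE]);
      (nE, [:: tA; nt nE; nt nN; tC]);
      (nN, [:: tB; nt nE; tC; nt nE; tA; nt nE; tB; nt nE]);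
      (nN, [:: tB; nt nE; nt nN; tB; nt nE]);
      (nF, [::]);
      (nF, [:: nt nF; nt nF]);
      (nF, [:: tC; nt nM; nt nF; tA]);
      (nM, [:: nt nF; tB; nt nF; tA; nt nF; tC; nt nF; tB]);
      (nM, [:: nt nF; tB; nt nM; nt nF; tB])].

Definition Pi2_grammar : cfg (option 'I_3) := @CFG _ 'I_6 Pi2_rules nS.

Definition nt_lang (X : 'I_6) (w : seq (option 'I_3)) : Prop :=
  match nat_of_ord X with
  | 0 => wp_padded w
  | 1 => w = [:: None] \/ exists x w', wp_padded w' /\ w = Some x :: w' ++ [:: Some x]
  | 2 => exists2 t, one_word t & w = map Some t
  | 3 => exists2 t, mid_word t & w = map Some t
  | 4 => exists2 t, one_word t & w = map Some (rev t)
  | _ => exists2 t, mid_word t & w = map Some (rev t)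
  end.

Fixpoint sform_lang (s : seq sym) (w : seq (option 'I_3)) : Prop :=
  match s with
  | [::] => w = [::]
  | inl X :: s' => exists w1 w2, [/\ w = w1 ++ w2, nt_lang X w1 & sform_lang s' w2]
  | inr t :: s' => exists2 w2, w = t :: w2 & sform_lang s' w2
  end.

Lemma sform_lang_cat s1 s2 w : sform_lang (s1 ++ s2) w <->
  exists w1 w2, [/\ w = w1 ++ w2, sform_lang s1 w1 & sform_lang s2 w2].
Proof.
elim: s1 w => [|[X|t] s1 IH] w /=.
- by split=> [H|[w1 [w2 [-> -> H]]]] //; exists [::], w.
- split.
  + move=> [w1 [w2 [-> HX /IH [w3 [w4 [-> H3 H4]]]]]].
    by exists (w1 ++ w3), w4; split; [rewrite catA | exists w1, w3 |].
  + move=> [w1 [w2 [-> [w3 [w4 [-> HX H]]] H2]]].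
    by exists w3, (w4 ++ w2); split; [rewrite catA | | apply/IH; exists w4, w2].
- split.
  + move=> [w2 -> /IH [w3 [w4 [-> H3 H4]]]].
    by exists (t :: w3), w4; split=> //; exists w3.
  + move=> [w1 [w2 [-> [w3 -> H] H2]]].
    by exists (w3 ++ w2) => //; apply/IH; exists w3, w2.
Qed.

Lemma sform_lang_terminals w : sform_lang (map inr w) w.
Proof. by elim: w => //= t w IH; exists w. Qed.

Ltac norm := repeat progress
  (rewrite ?cats0 ?map_cat ?rev_cat ?rev_cons ?map_rcons -?cats1 /=); catn.

Lemma sound_S x y z : nt_lang nE x -> nt_lang nQ y -> nt_lang nF z ->
  nt_lang nS (x ++ y ++ z ++ [::]).
Proof.
rewrite /nt_lang /= => [[t Ht ->]] Hy [s Hs ->].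
case: Hy => [->|[xx [ww [[u [v [wd [Hu Hv ->]]]] ->]]]].
- by exists t, s, [::]; split; [exact: padded_nil | exact: padded_nil | norm].
- exists (t ++ xx :: u), (s ++ xx :: v), (xx :: wd).
  by split; [exact: padded_cons | exact: padded_cons | norm].
Qed.

Lemma sound_Q_hash : nt_lang nQ [:: None].
Proof. by left. Qed.

Lemma sound_Q_wrap x w : nt_lang nS w -> nt_lang nQ (Some x :: w ++ [:: Some x]).
Proof. by move=> H; right; exists x, w. Qed.

Lemma sound_E_nil : nt_lang nE [::].
Proof. by exists [::]; first exact: one_nil. Qed.

Lemma sound_E_cat x y : nt_lang nE x -> nt_lang nE y -> nt_lang nE (x ++ y ++ [::]).
Proof.
rewrite /nt_lang /= => [[t Ht ->]] [s Hs ->].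
by exists (t ++ s); [exact: one_cat | norm].
Qed.

Lemma sound_E_wrap x y : nt_lang nE x -> nt_lang nN y ->
  nt_lang nE (Some la :: x ++ y ++ [:: Some lc]).
Proof.
rewrite /nt_lang /= => [[t Ht ->]] [s Hs ->].
by exists (la :: t ++ s ++ [:: lc]); [exact: one_wrap | norm].
Qed.

Lemma sound_N_base x0 x3 x6 x9 :
  nt_lang nE x0 -> nt_lang nE x3 -> nt_lang nE x6 -> nt_lang nE x9 ->
  nt_lang nN (Some lb :: x0 ++ Some lc :: x3 ++ Some la :: x6 ++ Some lb :: x9 ++ [::]).
Proof.
rewrite /nt_lang /= => [[t0 H0 ->]] [t3 H3 ->] [t6 H6 ->] [t9 H9 ->].
by exists (lb :: t0 ++ lc :: t3 ++ la :: t6 ++ lb :: t9); [exact: mid_base | norm].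
Qed.

Lemma sound_N_step x0 x2 x5 : nt_lang nE x0 -> nt_lang nN x2 -> nt_lang nE x5 ->
  nt_lang nN (Some lb :: x0 ++ x2 ++ Some lb :: x5 ++ [::]).
Proof.
rewrite /nt_lang /= => [[t0 H0 ->]] [t2 H2 ->] [t5 H5 ->].
by exists (lb :: t0 ++ t2 ++ lb :: t5); [exact: mid_step | norm].
Qed.

Lemma sound_F_nil : nt_lang nF [::].
Proof. by exists [::]; first exact: one_nil. Qed.

Lemma sound_F_cat x y : nt_lang nF x -> nt_lang nF y -> nt_lang nF (x ++ y ++ [::]).
Proof.
rewrite /nt_lang /= => [[t Ht ->]] [s Hs ->].
by exists (s ++ t); [exact: one_cat | norm].
Qed.

Lemma sound_F_wrap x y : nt_lang nM x -> nt_lang nF y ->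
  nt_lang nF (Some lc :: x ++ y ++ [:: Some la]).
Proof.
rewrite /nt_lang /= => [[t Ht ->]] [s Hs ->].
by exists (la :: s ++ t ++ [:: lc]); [exact: one_wrap | norm].
Qed.

Lemma sound_M_base x x2 x5 x8 :
  nt_lang nF x -> nt_lang nF x2 -> nt_lang nF x5 -> nt_lang nF x8 ->
  nt_lang nM (x ++ Some lb :: x2 ++ Some la :: x5 ++ Some lc :: x8 ++ [:: Some lb]).
Proof.
rewrite /nt_lang /= => [[t0 H0 ->]] [t3 H3 ->] [t6 H6 ->] [t9 H9 ->].
by exists (lb :: t9 ++ lc :: t6 ++ la :: t3 ++ lb :: t0); [exact: mid_base | norm].
Qed.

Lemma sound_M_step x x2 x4 : nt_lang nF x -> nt_lang nM x2 -> nt_lang nF x4 ->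
  nt_lang nM (x ++ Some lb :: x2 ++ x4 ++ [:: Some lb]).
Proof.
rewrite /nt_lang /= => [[t0 H0 ->]] [t2 H2 ->] [t5 H5 ->].
by exists (lb :: t5 ++ t2 ++ lb :: t0); [exact: mid_step | norm].
Qed.

Lemma in_list (U : eqType) (x : U) s : x \in s -> List.In x s.
Proof. by elim: s => //= y s IH; rewrite in_cons => /orP [/eqP ->|/IH]; auto. Qed.

Lemma rules_sound X rhs : (X, rhs) \in Pi2_rules ->
  forall w, sform_lang rhs w -> nt_lang X w.
Proof.
move/in_list => H w Hw; rewrite /Pi2_rules /= in H.
repeat (destruct H as [H|H];
  [injection H as <- <-; simpl in Hw;
   repeat match goal with
   | H : exists _, _ |- _ => destruct H
   | H : exists2 _, _ & _ |- _ => destruct H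
   | H : _ /\ _ |- _ => destruct H
   | H : [/\ _, _ & _] |- _ => destruct H
   end; subst |]); last by [].
- exact: sound_S.
- exact: sound_Q_hash.
- exact: sound_Q_wrap.
- exact: sound_Q_wrap.
- exact: sound_Q_wrap.
- exact: sound_E_nil.
- exact: sound_E_cat.
- exact: sound_E_wrap.
- exact: sound_N_base.
- exact: sound_N_step.
- exact: sound_F_nil.
- exact: sound_F_cat.
- exact: sound_F_wrap.
- exact: sound_M_base.
- exact: sound_M_step.
Qed.

Lemma derives_sound s1 s2 : derives Pi2_grammar s1 s2 ->
  forall w, sform_lang s2 w -> sform_lang s1 w.
Proof.
elim=> [s|t1 t2 t3 [u [v [X [rhs [Hin [-> ->]]]]]] _ IH] w //.
move/IH => /sform_lang_cat [w1 [w2 [-> Hu /sform_lang_cat [w3 [w4 [-> Hr Hv]]]]]].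
apply/sform_lang_cat; exists w1, (w3 ++ w4); split=> //.
by exists w3, w4; split=> //; exact: (rules_sound Hin Hr).
Qed.

Notation derivesP := (derives Pi2_grammar).

Definition letters (w : seq 'I_3) : seq sym := map inr (map Some w).

Lemma letters_cat u v : letters (u ++ v) = letters u ++ letters v.
Proof. by rewrite /letters !map_cat. Qed.

Lemma letters_cons x u : letters (x :: u) = tl x :: letters u.
Proof. by []. Qed.

Lemma rule_in X rhs : (X, rhs) \in Pi2_rules -> derivesP [:: nt X] rhs.
Proof. exact: (@derives_rule _ Pi2_grammar). Qed.

Lemma derives_one_mid : (forall t, one_word t -> derivesP [:: nt nE] (letters t)) /\
  (forall t, mid_word t -> derivesP [:: nt nN] (letters t)).
Proof.
apply: one_mid_mut.
- exact: (@rule_in nE [::]).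
- move=> u v _ Hu _ Hv; apply: derives_trans (@rule_in nE [:: nt nE; nt nE] _) _ => //.
  by rewrite letters_cat; apply: derives_nonterm.
- move=> u v _ Hu _ Hv.
  apply: derives_trans (@rule_in nE [:: tA; nt nE; nt nN; tC] _) _ => //.
  rewrite letters_cons !letters_cat; apply: derives_term.
  by do 2 apply: derives_nonterm => //; apply: derives_refl.
- move=> e1 e2 e3 e4 _ H1 _ H2 _ H3 _ H4.
  apply: derives_trans
    (@rule_in nN [:: tB; nt nE; tC; nt nE; tA; nt nE; tB; nt nE] _) _ => //.
  rewrite !(letters_cons, letters_cat) -[letters e4]cats0.
  by do 4 (apply: derives_term; apply: derives_nonterm => //); apply: derives_refl.
- move=> e1 n e2 _ H1 _ H2 _ H3.
  apply: derives_trans (@rule_in nN [:: tB; nt nE; nt nN; tB; nt nE] _) _ => //.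
  rewrite !(letters_cons, letters_cat) -[letters e2]cats0; apply: derives_term.
  do 2 apply: derives_nonterm => //; apply: derives_term.
  by apply: derives_nonterm => //; apply: derives_refl.
Qed.

Lemma derives_one_mid_rev : (forall t, one_word t -> derivesP [:: nt nF] (letters (rev t))) /\
  (forall t, mid_word t -> derivesP [:: nt nM] (letters (rev t))).
Proof.
apply: one_mid_mut.
- exact: (@rule_in nF [::]).
- move=> u v _ Hu _ Hv; apply: derives_trans (@rule_in nF [:: nt nF; nt nF] _) _ => //.
  by rewrite rev_cat letters_cat; apply: derives_nonterm.
- move=> u v _ Hu _ Hv.
  apply: derives_trans (@rule_in nF [:: tC; nt nM; nt nF; tA] _) _ => //.
  have -> : rev (la :: u ++ v ++ [:: lc]) = lc :: rev v ++ rev u ++ [:: la] by norm.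
  rewrite letters_cons !letters_cat; apply: derives_term.
  by do 2 apply: derives_nonterm => //; apply: derives_refl.
- move=> e1 e2 e3 e4 _ H1 _ H2 _ H3 _ H4.
  apply: derives_trans
    (@rule_in nM [:: nt nF; tB; nt nF; tA; nt nF; tC; nt nF; tB] _) _ => //.
  have -> : rev (lb :: e1 ++ lc :: e2 ++ la :: e3 ++ lb :: e4) =
    rev e4 ++ lb :: rev e3 ++ la :: rev e2 ++ lc :: rev e1 ++ [:: lb] by norm.
  rewrite !(letters_cons, letters_cat).
  by do 4 (apply: derives_nonterm => //; apply: derives_term); apply: derives_refl.
- move=> e1 n e2 _ H1 _ H2 _ H3.
  apply: derives_trans (@rule_in nM [:: nt nF; tB; nt nM; nt nF; tB] _) _ => //.
  have -> : rev (lb :: e1 ++ n ++ lb :: e2) = rev e2 ++ lb :: rev n ++ rev e1 ++ [:: lb].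
    by norm.
  rewrite !(letters_cons, letters_cat); apply: derives_nonterm => //; apply: derives_term.
  by do 2 apply: derives_nonterm => //; apply: derives_term; apply: derives_refl.
Qed.

Lemma rule_Q_wrap x : (nQ, [:: tl x; nt nS; tl x]) \in Pi2_rules.
Proof. by case: x => [[|[|[|m]]] Hm]. Qed.

Lemma derives_padded wd u v : padded u wd -> padded v wd ->
  derivesP [:: nt nS] (letters u ++ tH :: letters (rev v)).
Proof.
elim: wd u v => [|x wd IH] u v.
- move=> /padded_nilP Hu /padded_nilP Hv.
  apply: derives_trans (@rule_in nS [:: nt nE; nt nQ; nt nF] _) _ => //.
  apply: derives_nonterm; first exact: derives_one_mid.1.
  change (tH :: letters (rev v)) with ([:: tH] ++ letters (rev v)).
  rewrite -[letters (rev v)]cats0.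
  apply: derives_nonterm; first exact: (@rule_in nQ [:: tH]).
  by apply: derives_nonterm; [exact: derives_one_mid_rev.1 | exact: derives_refl].
- move=> /padded_consP [t [u' [Ht Hu' ->]]] /padded_consP [s [v' [Hs Hv' ->]]].
  apply: derives_trans (@rule_in nS [:: nt nE; nt nQ; nt nF] _) _ => //.
  have -> : letters (t ++ x :: u') ++ tH :: letters (rev (s ++ x :: v')) =
    letters t ++ (tl x :: (letters u' ++ tH :: letters (rev v')) ++ [:: tl x]) ++
    letters (rev s) ++ [::] by rewrite /letters; norm.
  apply: derives_nonterm; first exact: derives_one_mid.1.
  apply: derives_nonterm.
    apply: derives_trans (rule_in (rule_Q_wrap x)) _; apply: derives_term.
    by apply: derives_nonterm; [exact: IH | exact: derives_refl].
  by apply: derives_nonterm; [exact: derives_one_mid_rev.1 | exact: derives_refl].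
Qed.

Lemma Pi2_grammar_lang w : cfg_lang Pi2_grammar w <-> wp_padded w.
Proof.
split.
- move=> H; have /= [w1 [w2 [-> H1 ->]]] := derives_sound H (sform_lang_terminals w).
  by rewrite cats0.
- move=> [u [v [wd [Hu Hv ->]]]]; rewrite /cfg_lang.
  have -> : map inr (map Some u ++ None :: map Some (rev v)) =
    letters u ++ tH :: letters (rev v) by rewrite /letters map_cat.
  exact: derives_padded Hu Hv.
Qed.

Theorem word_problem_context_free : context_free (word_problem Pi2_rel).
Proof. by exists Pi2_grammar => w; rewrite word_problem_padded Pi2_grammar_lang. Qed.

Lemma pop_rel_junction top low bottom s :
  irreducible (top ++ bottom) -> pop_rel (top ++ low) = Some s ->
  exists i j, [/\ 0 < i, j <= size low, xrev i ++ xrev i = top ++ take j low & s = drop j low].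
Proof.
move=> Hirr /pop_relP [i Hi]; set r := xrev i ++ xrev i; rewrite catA -/r => E.
have [Hle|Hlt] := leqP (size r) (size top).
  have Etop : top = r ++ take (size top - size r) s.
    have := congr1 (take (size top)) E.
    by rewrite (take_size_cat _ (erefl (size top))) take_cat ltnNge Hle.
  by have := Hirr 0; rewrite drop0 Etop /r -!catA pop_rel_cat.
exists i, (size r - size top); split=> //.
- by have := congr1 size E; rewrite !size_cat; lia.
- have := congr1 (take (size r)) E.
  by rewrite (take_size_cat _ (erefl (size r))) take_cat ltnNge (ltnW Hlt).
- have := congr1 (drop (size r)) E.
  by rewrite (drop_size_cat _ (erefl (size r))) drop_cat ltnNge (ltnW Hlt).
Qed.

(* Reading a prefix [q] of the word [rev st0] onto the stack [st0]: the
   first [q1] part of [q] cancelled the top [k] letters of [st0], and the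
   rest [q2] lies uncancelled on top. *)
Definition stack_inv (st0 q : seq 'I_3) : Prop :=
  exists q1 q2 k, [/\ q = q1 ++ q2, k <= size st0, nf st0 q = rev q2 ++ drop k st0
                    & C (rev (take k st0) ++ q1) [::]].

Lemma stack_inv_rcons st0 q l rest : irreducible st0 -> rev st0 = rcons q l ++ rest ->
  stack_inv st0 q -> stack_inv st0 (rcons q l).
Proof.
move=> Hirr Hst [q1 [q2 [k [Hq Hk Hn Hc]]]].
have Hn' : nf st0 (rcons q l) = push (rev q2 ++ drop k st0) l by rewrite -cats1 nf_cat Hn.
move: Hn'; rewrite /push.
case E: (pop_rel ((l :: rev q2) ++ drop k st0)) => [s|] Hn'; last first.
  exists q1, (rcons q2 l), k; split=> //; first by rewrite Hq rcons_cat.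
  by rewrite Hn' rev_rcons.
have Hirr' : irreducible ((l :: rev q2) ++ rev q1).
  have -> : (l :: rev q2) ++ rev q1 = drop (size rest) st0.
    by rewrite -[st0]revK Hst rev_cat drop_size_cat ?size_rev // Hq rev_rcons rev_cat.
  by move=> j; rewrite drop_drop.
have [i [j [Hi Hj ER Es]]] := pop_rel_junction Hirr' E.
exists (q1 ++ rcons q2 l), [::], (j + k); split=> //.
- by rewrite Hq cats0 rcons_cat.
- by move: Hj; rewrite size_drop; lia.
- by rewrite Hn' Es drop_drop.
rewrite addnC takeD rev_cat -catA (catA (rev (take k st0))) Hc /=.
have <- : rev (xrev i ++ xrev i) = rev (take j (drop k st0)) ++ rcons q2 l.
  by rewrite ER rev_cat /= rev_cons revK.
by rewrite rev_cat !rev_xrev; exact: xword_sq.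
Qed.

Lemma stack_inv_prefix st0 : irreducible st0 ->
  forall q rest, rev st0 = q ++ rest -> stack_inv st0 q.
Proof.
move=> Hirr; elim/last_ind => [|q l IH] rest Hst.
  by exists [::], [::], 0; split; rewrite ?drop0 ?take0 //; reflexivity.
apply: (stack_inv_rcons Hirr Hst); apply: (IH (l :: rest)).
by rewrite Hst -cats1 -catA.
Qed.

(* Every idempotent of Pi_2 factors as e = p z with z p = 1; indeed the
   normal form s of e satisfies nf(s s) = s, and the cancellation in s s
   eats exactly a suffix z of s against a prefix of the second copy. *)
Lemma idempotent_split e : C (e ++ e) e -> exists p z, C e (p ++ z) /\ C (z ++ p) [::].
Proof.
move=> He; set st0 := nf [::] e.
have Hirr : irreducible st0 by apply: irreducible_nf irreducible_nil.
have Hee : C e (rev st0) := cong_nf e.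
have Hfix : nf st0 (rev st0) = st0.
  have H1 : nf [::] (rev st0) = st0 by rewrite -(nf_cong Hee).
  have : nf [::] (rev st0 ++ rev st0) = nf [::] (rev st0) by apply: nf_cong; rewrite -Hee.
  by rewrite nf_cat H1.
have [q1 [q2 [k [Hq Hk Hn Hc]]]] := stack_inv_prefix Hirr (esym (cats0 (rev st0))).
have Hk2 : k = size q2.
  by have := congr1 size Hn; rewrite Hfix size_cat size_rev size_drop; lia.
have Ht : take k st0 = rev q2.
  by rewrite -[st0]revK Hq rev_cat Hk2 take_size_cat ?size_rev.
by exists q1, q2; rewrite Hee Hq; split; [reflexivity | rewrite Ht revK in Hc].
Qed.

(* States are pairs
   (n, s) of a point n of the naturals and a stack s of counters: a pushes a
   counter 0, b increments the top counter, and c pops a counter k and moves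
   the point by the transposition (0 k).  Thus x_i = a b^i c acts on points
   as the transposition (0 i), an involution, so the relators act trivially. *)
Definition swap0 (k n : nat) : nat :=
  if k == 0 then n else if n == 0 then k else if n == k then 0 else n.

Definition act_letter (x : nat * seq nat) (l : 'I_3) : nat * seq nat :=
  let: (n, s) := x in
  if l == la then (n, 0 :: s)
  else if l == lb then (n, if s is k :: s' then k.+1 :: s' else [::])
  else (if s is k :: s' then (swap0 k n, s') else (n, [::])).

Definition act (x : nat * seq nat) (w : seq 'I_3) : nat * seq nat := foldl act_letter x w.

Lemma act_cons x l w : act x (l :: w) = act (act_letter x l) w.
Proof. by []. Qed.

Lemma act_cat x u v : act x (u ++ v) = act (act x u) v.
Proof. exact: foldl_cat. Qed.

Lemma act_xword i n s : act (n, s) (xword i) = (swap0 i n, s).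
Proof.
have act_b k : act (n, k :: s) (nseq i lb) = (n, (k + i) :: s).
  by elim: i k => [|i IH] k /=; rewrite ?addn0 // IH addnS.
by rewrite /xword -cat_cons act_cat /= act_b.
Qed.

Lemma swap0K i n : 0 < i -> swap0 i (swap0 i n) = n.
Proof.
rewrite /swap0; case: i => // i _ /=.
case: n => [|n] /=; first by rewrite eqxx.
case: (n =P i) => [->|Hni] /=; first by rewrite eqxx.
have Hne : (n.+1 == i.+1) = false by apply/eqP; lia.
by rewrite Hne Hne.
Qed.

Lemma act_cong u v : C u v -> forall x, act x u = act x v.
Proof.
elim=> [u' v' l r [i [Hi [-> ->]]]|w|w1 w2 _ IH|w1 w2 w3 _ IH1 _ IH2] x //.
- rewrite -/(xword i) !act_cat; case: (act x u') => n s.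
  by rewrite !act_xword swap0K.
- by rewrite IH1.
Qed.

Definition height_step (l : 'I_3) (h : nat) : nat :=
  if l == la then h.+1 else if l == lb then h else h.-1.

Lemma act_letter_height n s l : size (act_letter (n, s) l).2 = height_step l (size s).
Proof. by rewrite /act_letter /height_step; case: (l == la) => //; case: (l == lb); case: s. Qed.

Lemma act_height w n n' s s' :
  size s <= size s' -> size (act (n, s) w).2 <= size (act (n', s') w).2.
Proof.
elim: w n n' s s' => [|l w IH] n n' s s' H //; rewrite !act_cons.
case E1: (act_letter (n, s) l) => [n1 s1]; case E2: (act_letter (n', s') l) => [n2 s2].
apply: IH; have := act_letter_height n s l; have := act_letter_height n' s' l.
rewrite E1 E2 /= => -> ->; rewrite /height_step.
by case: (l == la) => //; case: (l == lb) => //; rewrite -!subn1 leq_sub2r.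
Qed.

Lemma unit_stack_empty u v n : C (v ++ u) [::] -> (act (n, [::]) u).2 = [::].
Proof.
move=> H; case E: (act (n, [::]) v) => [m t].
have H2 : act (m, t) u = (n, [::]) by rewrite -E -act_cat (act_cong H).
by have := @act_height u n m [::] t (leq0n _); rewrite H2 leqn0 size_eq0 => /eqP.
Qed.

(* Reading a word w can only create counters up to (initial bound) + |w|,
   and so cannot move a point beyond that bound. *)
Lemma act_letter_bound K n s l : all (fun k => k <= K) s ->
  all (fun k => k <= K.+1) (act_letter (n, s) l).2 /\
  (K.+1 < n -> (act_letter (n, s) l).1 = n).
Proof.
move=> Hs; have Hs' : all (fun k => k <= K.+1) s.
  by apply: sub_all Hs => k /= Hk; apply: leqW.
rewrite /act_letter; case: (l == la) => /=; first by rewrite Hs'.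
case: (l == lb) => /=.
  by case: s Hs Hs' => [|k s] //= /andP[Hk Hs] /andP[_ Hs']; rewrite ltnS Hk Hs'.
case: s Hs Hs' => [|k s] //= /andP[Hk Hs] /andP[_ Hs']; split=> // Hn.
rewrite /swap0; case: (k == 0) => //.
have Hn0 : (n == 0) = false by apply/eqP; lia.
have Hnk : (n == k) = false by apply/eqP; lia.
by rewrite Hn0 Hnk.
Qed.

Lemma act_bound w K n s : all (fun k => k <= K) s ->
  all (fun k => k <= K + size w) (act (n, s) w).2 /\
  (K + size w < n -> (act (n, s) w).1 = n).
Proof.
elim: w K n s => [|l w IH] K n s Hs; first by rewrite /= addn0.
rewrite act_cons [size _]/= addnS -addSn.
have [H1 H2] := act_letter_bound n l Hs.
case E: (act_letter (n, s) l) H1 H2 => [n1 s1] /= H1 H2.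
have [J1 J2] := IH K.+1 n1 s1 H1; split=> // Hn.
by rewrite J2 H2 //; lia.
Qed.

Lemma unit_fixes u v n : C (v ++ u) [::] -> size u < n -> act (n, [::]) u = (n, [::]).
Proof.
move=> H Hn; have [_ J2] := @act_bound u 0 n [::] isT.
by rewrite [act _ u]surjective_pairing (unit_stack_empty n H) J2.
Qed.

Lemma unit_fixes_inv u v n :
  C (u ++ v) [::] -> C (v ++ u) [::] -> size v < n -> act (n, [::]) u = (n, [::]).
Proof.
move=> Huv Hvu Hn.
have Hv := unit_fixes Huv Hn.
by rewrite -{1}Hv -act_cat (act_cong Hvu).
Qed.

Lemma act_flatten (ws : seq (seq 'I_3)) n :
  (forall w, List.In w ws -> act (n, [::]) w = (n, [::])) ->
  act (n, [::]) (flatten ws) = (n, [::]).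
Proof.
elim: ws => [|w ws IH] Hw //=; rewrite act_cat Hw; last by left.
by apply: IH => w' H; apply: Hw; right.
Qed.

Lemma sumn_map_ge (U : Type) (f : U -> nat) (gs : seq U) g :
  List.In g gs -> f g <= sumn (map f gs).
Proof.
elim: gs => //= h gs IH [->|Hg]; first exact: leq_addr.
exact: leq_trans (IH Hg) (leq_addl _ _).
Qed.

(* Fix an idempotent e = p z with z p = 1.  Conjugation w |-> z w p then
   sends the maximal subgroup H_e into the group of units of Pi_2. *)
Section MaximalSubgroup.
Variables e p z : seq 'I_3.
Hypotheses (He : C (e ++ e) e) (Hez : C e (p ++ z)) (Hzp : C (z ++ p) [::]).

Lemma zp_cancel r : C (z ++ p ++ r) r.
Proof. by rewrite catA Hzp; reflexivity. Qed.

Lemma eMe_left w r : in_eMe Pi2_rel e w -> C (e ++ w ++ r) (w ++ r).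
Proof. by move=> [y ->]; rewrite !catA He; reflexivity. Qed.

Lemma eMe_right w r : in_eMe Pi2_rel e w -> C (w ++ e ++ r) (w ++ r).
Proof. by move=> [y ->]; catn; rewrite (catA e e r) He; reflexivity. Qed.

Lemma conj_inverse g w : in_eMe Pi2_rel e w -> C (g ++ w) e ->
  C ((z ++ g ++ p) ++ (z ++ w ++ p)) [::].
Proof.
move=> Hw Hgw; catn.
have pz : C (p ++ z ++ w ++ p) (e ++ w ++ p) by rewrite catA -Hez; reflexivity.
by rewrite pz eMe_left // (catA g w p) Hgw Hez; catn; rewrite zp_cancel.
Qed.

Lemma conj_flatten ws : (forall w, List.In w ws -> in_eMe Pi2_rel e w) ->
  C (z ++ e ++ flatten ws ++ p) (flatten [seq z ++ w ++ p | w <- ws]).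
Proof.
elim: ws => [|w ws IH] Hw /=; first by rewrite Hez; catn; rewrite zp_cancel.
have Hwe := Hw w (or_introl erefl).
rewrite -(IH (fun w' H => Hw w' (or_intror H))); catn.
have pz r : C (p ++ z ++ r) (e ++ r) by rewrite catA -Hez; reflexivity.
have ee r : C (e ++ e ++ r) (e ++ r) by rewrite catA He; reflexivity.
by rewrite eMe_left // pz ee eMe_right //; reflexivity.
Qed.

Lemma conj_xword_maxsub i : 0 < i -> in_maxsub Pi2_rel e (p ++ xword i ++ z).
Proof.
move=> Hi; have Hx : in_eMe Pi2_rel e (p ++ xword i ++ z).
  by exists (p ++ xword i ++ z); rewrite Hez; catn; rewrite !zp_cancel; reflexivity.
have Hxx : C ((p ++ xword i ++ z) ++ p ++ xword i ++ z) e.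
  by rewrite Hez -!catA zp_cancel (catA (xword i)) xword_sq //=; reflexivity.
by split=> //; exists (p ++ xword i ++ z).
Qed.

Lemma conj_generator_fixes gs w n :
  (forall g, List.In g gs -> in_maxsub Pi2_rel e g) ->
  List.In w gs \/ (exists g, List.In g gs /\ eMe_inverse Pi2_rel e g w) ->
  sumn [seq size (z ++ g ++ p) | g <- gs] < n ->
  in_eMe Pi2_rel e w /\ act (n, [::]) (z ++ w ++ p) = (n, [::]).
Proof.
move=> Hgs [Hg|[g [Hg [Hwe [Hgw Hwg]]]]] Hn.
- have [Hge [y [Hye [Hgy Hyg]]]] := Hgs w Hg; split=> //.
  apply: (unit_fixes (conj_inverse Hge Hyg)).
  exact: leq_ltn_trans (sumn_map_ge (fun g => size (z ++ g ++ p)) Hg) Hn.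
- have [Hge _] := Hgs g Hg; split=> //.
  apply: (unit_fixes_inv (conj_inverse Hge Hwg) (conj_inverse Hwe Hgw)).
  exact: leq_ltn_trans (sumn_map_ge (fun g => size (z ++ g ++ p)) Hg) Hn.
Qed.

(* H_e is not finitely generated: with K bounding the conjugated generators,
   the element p x_(K+1) z of H_e conjugates back to x_(K+1), which moves the
   point K+1 to 0, whereas every product of the generators fixes K+1. *)
Lemma maxsub_not_fg : ~ maxsub_fg Pi2_rel e.
Proof.
move=> [gs [Hgs Hgen]]; set N := (sumn [seq size (z ++ g ++ p) | g <- gs]).+1.
have [ws [Hws Hxw]] := Hgen _ (conj_xword_maxsub (ltn0Sn _ : 0 < N)).
have Hfix w : List.In w ws -> in_eMe Pi2_rel e w /\ act (N, [::]) (z ++ w ++ p) = (N, [::]).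
  by move=> /Hws Hw; apply: (conj_generator_fixes Hgs Hw (leqnn N)).
have Hmoved : act (N, [::]) (z ++ (p ++ xword N ++ z) ++ p) = (0, [::]).
  have H : C (z ++ (p ++ xword N ++ z) ++ p) (xword N).
    by rewrite -!catA zp_cancel Hzp cats0; reflexivity.
  by rewrite (act_cong H) act_xword /swap0 eqxx.
have Hfixed : act (N, [::]) (z ++ (p ++ xword N ++ z) ++ p) = (N, [::]).
  have H : C (z ++ (p ++ xword N ++ z) ++ p) (flatten [seq z ++ w ++ p | w <- ws]).
    rewrite Hxw -conj_flatten; first by rewrite -catA; reflexivity.
    by move=> w /Hfix [].
  rewrite (act_cong H); apply: act_flatten => _ /List.in_map_iff [w [<- Hw]].
  exact: (Hfix w Hw).2.
by rewrite Hmoved in Hfixed.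
Qed.
End MaximalSubgroup.

Theorem mainTheorem11 :
  context_free (word_problem Pi2_rel) /\
  (forall e : seq 'I_3, is_idempotent Pi2_rel e -> ~ maxsub_fg Pi2_rel e).
Proof.
split; first exact: word_problem_context_free.
move=> e He; have [p [z [Hez Hzp]]] := idempotent_split He.
exact: maxsub_not_fg He Hez Hzp.
Qed.
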